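(* Let $q:\mathbb{Z}^n\to\mathbb{Z}$ be a slender unit form admitting a maximal omnipresent root. Then $q$ is weakly non-negative.
   Context: A unit form is $q(x_1,\dots,x_n)=\sum_i x_i^2+\sum_{i<j}q_{ij}x_ix_j$ with $q_{ij}\in\mathbb{Z}$; its bilinear form is $q(x,y)=q(x+y)-q(x)-q(y)$, so $q(e_i,e_j)=q_{ij}$. $q$ is slender if $q(e_i,e_j)\ge -1$ for all $i\ne j$. A root of $q$ is $v\in\mathbb{Z}^n$ with non-negative coordinates and $q(v)=1$; omnipresent if all $v(i)>0$; maximal if every root $w\ge v$ (coordinatewise) equals $v$. $q$ is weakly non-negative if $q(v)\ge0$ for all $v\in\mathbb{N}^n$. *)

From mathcomp Require Import all_boot all_order all_algebra.
Set Implicit Arguments. Unset Strict Implicit. Unset Printing Implicit Defensive.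
Import Order.TTheory GRing.Theory Num.Theory.
Local Open Scope ring_scope.

(* A unit form q(x) = sum_i x_i^2 + sum_{i<j} q_ij x_i x_j on Z^n is given by
   its integer coefficients qc i j; only the entries with i < j are used. *)
Definition unit_form (n : nat) (qc : 'I_n -> 'I_n -> int) (x : 'I_n -> int) : int :=
  \sum_(i < n) x i ^+ 2 + \sum_(i < n) \sum_(j < n | (i < j)%N) qc i j * x i * x j.

Definition unit_bil (n : nat) (qc : 'I_n -> 'I_n -> int) (x y : 'I_n -> int) : int :=
  unit_form qc (fun i => x i + y i) - unit_form qc x - unit_form qc y.

Definition ebasis (n : nat) (i : 'I_n) : 'I_n -> int := fun k => (k == i)%:R.

Definition slender (n : nat) (qc : 'I_n -> 'I_n -> int) : Prop :=
  forall i j : 'I_n, i != j -> unit_bil qc (ebasis i) (ebasis j) >= -1.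

Definition is_root (n : nat) (qc : 'I_n -> 'I_n -> int) (v : 'I_n -> int) : Prop :=
  (forall i, 0 <= v i) /\ unit_form qc v = 1.

Definition omnipresent (n : nat) (v : 'I_n -> int) : Prop := forall i, 0 < v i.

Definition maximal_root (n : nat) (qc : 'I_n -> 'I_n -> int) (v : 'I_n -> int) : Prop :=
  is_root qc v /\
  forall w, is_root qc w -> (forall i, v i <= w i) -> forall i, w i = v i.

Definition weakly_nonneg (n : nat) (qc : 'I_n -> 'I_n -> int) : Prop :=
  forall v : 'I_n -> int, (forall i, 0 <= v i) -> 0 <= unit_form qc v.

From mathcomp Require Import all_boot all_order all_algebra.
From mathcomp Require Import ring zify.
Import Order.TTheory GRing.Theory Num.Theory.
Local Open Scope ring_scope.
Set Implicit Arguments. Unset Strict Implicit.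

(* If the
   omnipresent root v is maximal then q(v, e_j) >= 0 for all j (otherwise
   v - q(v, e_j) e_j would be a larger root), and 2 = 2 q(v) =
   sum_j v_j q(v, e_j) gives sum_j q(v, e_j) <= 2.  By induction on |d| one
   shows q(v + d) > 0 for every d >= 0: in a minimal counterexample u = v + d,
   removing e_j from u for j in the support of d leaves a vector that is not a
   root (by maximality), so q(u, e_j) <= q(u) - 1 <= -1.  Weighting these
   bounds by d_j gives q(v, d) >= |d| - 2, while weighting them by q(v, e_j),
   together with q(d, e_j) >= 3 d_j - |d| (slenderness), gives
   3 q(v, d) <= 2 (|d| - 2).  Finally, if q(x) < 0 for some x >= 0, then
   K := 1 + q(v, x) yields q(v + K x) = 1 + K^2 q(x) + K (K - 1) <= 1 - K <= 0.
*)

Section UnitFormAlgebra.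
Variables (n : nat) (qc : 'I_n -> 'I_n -> int).
Local Notation q := (unit_form qc).

Definition dot (x y : 'I_n -> int) : int := \sum_(i < n) x i * y i.

Definition gram (i j : 'I_n) : int :=
  (if i == j then 2 else 0) + (if (i < j)%N then qc i j else 0)
  + (if (j < i)%N then qc j i else 0).

(* [polar x j] is q(x, e_j). *)
Definition polar (x : 'I_n -> int) (j : 'I_n) : int := dot x (gram^~ j).

Definition cross (x y : 'I_n -> int) : int :=
  \sum_(i < n) \sum_(j < n | (i < j)%N) qc i j * x i * y j.

Lemma dotDl x y z : dot (fun i => x i + y i) z = dot x z + dot y z.
Proof. by rewrite /dot -big_split; apply: eq_bigr => i _; rewrite mulrDl. Qed.

Lemma dotZl s x y : dot (fun i => s * x i) y = s * dot x y.
Proof. by rewrite /dot mulr_sumr; apply: eq_bigr => i _; rewrite mulrA. Qed.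

Lemma dot_ebasis k y : dot (ebasis k) y = y k.
Proof.
rewrite /dot (bigD1 k) //= /ebasis eqxx mul1r big1 ?addr0 // => i /negbTE ->.
by rewrite mul0r.
Qed.

Lemma sum_ebasis k : \sum_(i < n) ebasis k i = 1.
Proof.
by rewrite -(dot_ebasis k (fun=> 1)); apply: eq_bigr => i _; rewrite mulr1.
Qed.

Lemma sub_ebasis_ge0 (d : 'I_n -> int) k : (forall i, 0 <= d i) -> 0 < d k ->
  forall i, 0 <= d i - ebasis k i.
Proof.
move=> d_ge0 dk_gt0 i; rewrite /ebasis.
by case: eqP => [->|_]; have := d_ge0 i; lia.
Qed.

Lemma eq_polar x y j : (forall i, x i = y i) -> polar x j = polar y j.
Proof. by move=> exy; apply: eq_bigr => i _; rewrite exy. Qed.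

Lemma polarD x y j : polar (fun i => x i + y i) j = polar x j + polar y j.
Proof. exact: dotDl. Qed.

Lemma polarZ s x j : polar (fun i => s * x i) j = s * polar x j.
Proof. exact: dotZl. Qed.

Lemma polar_ebasis k j : polar (ebasis k) j = gram k j.
Proof. exact: dot_ebasis. Qed.

Lemma gram_diag j : gram j j = 2.
Proof. by rewrite /gram eqxx ltnn addr0 addr0. Qed.

Lemma crossDl x y z : cross (fun i => x i + y i) z = cross x z + cross y z.
Proof.
rewrite /cross -big_split; apply: eq_bigr => i _.
by rewrite -big_split; apply: eq_bigr => j _ /=; ring.
Qed.

Lemma crossDr x y z : cross z (fun i => x i + y i) = cross z x + cross z y.
Proof.
rewrite /cross -big_split; apply: eq_bigr => i _.
by rewrite -big_split; apply: eq_bigr => j _ /=; ring.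
Qed.

Lemma dot_polar x y :
  dot y (polar x) = \sum_(i < n) 2 * x i * y i + cross x y + cross y x.
Proof.
have diagE : \sum_(i < n) \sum_(j < n) (if i == j then 2 * x i * y j else 0)
    = \sum_(i < n) 2 * x i * y i.
  by apply: eq_bigr => i _; rewrite -big_mkcond (big_pred1 i).
have upperE : \sum_(i < n) \sum_(j < n)
    (if (i < j)%N then qc i j * x i * y j else 0) = cross x y.
  by apply: eq_bigr => i _; rewrite [RHS]big_mkcond; apply: eq_bigr.
have lowerE : \sum_(i < n) \sum_(j < n)
    (if (j < i)%N then qc j i * y j * x i else 0) = cross y x.
  rewrite exchange_big; apply: eq_bigr => j _.
  by rewrite [RHS]big_mkcond; apply: eq_bigr.
rewrite /dot /polar /dot.
under eq_bigr => j _ do rewrite mulr_sumr.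
rewrite exchange_big -diagE -upperE -lowerE -!big_split.
apply: eq_bigr => i _; rewrite -!big_split.
apply: eq_bigr => j _ /=.
rewrite /gram; case: ltngtP => [ij|ji|/val_inj ->]; rewrite ?eqxx //=; try ring.
- by rewrite -(inj_eq val_inj) (ltn_eqF ij); ring.
- by rewrite -(inj_eq val_inj) (gtn_eqF ji); ring.
Qed.

Lemma unit_formD x y :
  q (fun i => x i + y i) = q x + q y + dot y (polar x).
Proof.
rewrite /unit_form -!/(cross _ _) crossDl !crossDr dot_polar.
have -> : \sum_(i < n) (x i + y i) ^+ 2 =
    \sum_(i < n) x i ^+ 2 + \sum_(i < n) y i ^+ 2 + \sum_(i < n) 2 * x i * y i.
  by rewrite -!big_split; apply: eq_bigr => i _ /=; ring.
ring.
Qed.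

Lemma unit_form_polar x : 2 * q x = dot x (polar x).
Proof.
rewrite dot_polar /unit_form -!/(cross _ _) mulrDr mulr_sumr -addrA -mulr2n.
by congr (_ + _); [apply: eq_bigr => i _; ring | rewrite mulr_natl].
Qed.

Lemma unit_formZ s x : q (fun i => s * x i) = s ^+ 2 * q x.
Proof.
apply: (@mulfI _ 2) => //.
rewrite mulrCA !unit_form_polar dotZl.
rewrite /dot !mulr_sumr; apply: eq_bigr => i _; rewrite polarZ; ring.
Qed.

Lemma unit_form_ebasis k : q (ebasis k) = 1.
Proof.
apply: (@mulfI _ 2) => //.
by rewrite unit_form_polar dot_ebasis polar_ebasis gram_diag mulr1.
Qed.

Lemma eq_unit_form x y : (forall i, x i = y i) -> q x = q y.
Proof.
move=> exy; rewrite /unit_form; congr (_ + _); apply: eq_bigr => i _.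
  by rewrite exy.
by apply: eq_bigr => j _; rewrite !exy.
Qed.

Lemma unit_bil_ebasis i j : unit_bil qc (ebasis i) (ebasis j) = gram i j.
Proof.
by rewrite /unit_bil unit_formD dot_ebasis polar_ebasis; ring.
Qed.

Lemma slender_gram : slender qc -> forall i j, i != j -> -1 <= gram i j.
Proof. by move=> sl i j ij; rewrite -unit_bil_ebasis; exact: sl. Qed.

Lemma polar_ge_slender (d : 'I_n -> int) j :
  slender qc -> (forall i, 0 <= d i) ->
  3 * d j - \sum_(i < n) d i <= polar d j.
Proof.
move=> /slender_gram gram_ge d_ge0.
suff : 3 * d j <= \sum_(i < n) (d i * gram i j + d i).
  by rewrite big_split /= -/(dot d _) -/(polar d j) lerBlDr.
rewrite (bigD1 j) //= gram_diag -[3 * d j]addr0.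
apply: lerD; first lia.
apply: sumr_ge0 => i ij; have := gram_ge i j ij; have := d_ge0 i; nia.
Qed.

End UnitFormAlgebra.

Section MaximalRoot.
Variables (n : nat) (qc : 'I_n -> 'I_n -> int) (v : 'I_n -> int).
Hypotheses (q_slender : slender qc) (v_max : maximal_root qc v)
  (v_omni : omnipresent v).
Local Notation q := (unit_form qc).

Lemma unit_form_root : q v = 1.
Proof. by case: v_max => -[]. Qed.

Lemma polar_root_ge0 j : 0 <= polar qc v j.
Proof.
rewrite leNgt; apply/negP => polar_lt0.
pose k := - polar qc v j.
pose w i := v i + k * ebasis j i.
have le_vw i : v i <= w i.
  by rewrite /w /ebasis; case: eqP => _; rewrite /k; lia.
have w_root : is_root qc w.
  split=> [i|]; first by have := le_vw i; have := v_omni i; lia.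
  rewrite /w unit_formD unit_formZ unit_form_ebasis dotZl dot_ebasis.
  by rewrite unit_form_root /k; ring.
by have := v_max.2 w w_root le_vw j; rewrite /w /ebasis eqxx /k; lia.
Qed.

Lemma sum_polar_root_le2 : \sum_(j < n) polar qc v j <= 2.
Proof.
have <- : dot v (polar qc v) = 2 by rewrite -unit_form_polar unit_form_root.
by apply: ler_sum => j _; have := v_omni j; have := polar_root_ge0 j; nia.
Qed.

Lemma polar_root_add_le (d : 'I_n -> int) j :
  (forall i, 0 <= d i) -> 0 < d j ->
  0 < q (fun i => v i + (d i - ebasis j i)) -> q (fun i => v i + d i) <= 0 ->
  polar qc (fun i => v i + d i) j <= q (fun i => v i + d i) - 1.
Proof.
move=> d_ge0 dj_gt0 qu'_gt0 qu_le0.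
set u' := fun i => v i + (d i - ebasis j i) in qu'_gt0 *.
have u_split i : v i + d i = u' i + ebasis j i by rewrite /u'; ring.
have q_u : q (fun i => v i + d i) = q u' + 1 + polar qc u' j.
  by rewrite (eq_unit_form _ u_split) unit_formD unit_form_ebasis dot_ebasis.
have polar_u : polar qc (fun i => v i + d i) j = polar qc u' j + 2.
  by rewrite (eq_polar _ _ u_split) polarD polar_ebasis gram_diag.
have [|qu'_lt2] := lerP 2 (q u'); first lia.
have v_le_u' i : v i <= u' i.
  by have := sub_ebasis_ge0 d_ge0 dj_gt0 i; rewrite /u'; lia.
have u'_root : is_root qc u'.
  by split=> [i|]; [have := v_le_u' i; have := v_omni i | ]; lia.
have := polar_root_ge0 j; rewrite -(eq_polar _ _ (v_max.2 _ u'_root v_le_u')).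
lia.
Qed.

Section Descent.
Variable d : 'I_n -> int.
Hypotheses (d_ge0 : forall i, 0 <= d i)
  (qu_le0 : q (fun i => v i + d i) <= 0)
  (polar_u_le : forall j, 0 < d j ->
     polar qc (fun i => v i + d i) j <= q (fun i => v i + d i) - 1).
Local Notation u := (fun i => v i + d i).
Local Notation m := (\sum_(i < n) d i).

Lemma sum_descent_ge j : 0 < d j -> 3 * d j + polar qc v j + 1 <= m.
Proof.
move=> /polar_u_le; rewrite polarD.
by have := polar_ge_slender j q_slender d_ge0; have := qu_le0; lia.
Qed.

Lemma dot_polar_root_ge : 2 <= m -> m - 2 <= dot d (polar qc v).
Proof.
move=> m_ge2.
have q_u : q u = 1 + q d + dot d (polar qc v).
  by rewrite unit_formD unit_form_root.
have dot_u : dot d (polar qc u) = 2 * q d + dot d (polar qc v).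
  rewrite unit_form_polar /dot -big_split; apply: eq_bigr => i _ /=.
  by rewrite polarD; ring.
have : dot d (polar qc u) <= m * (q u - 1).
  rewrite mulr_suml; apply: ler_sum => j _.
  have [dj_gt0|dj_le0] := ltrP 0 (d j).
    by apply: ler_wpM2l; [exact: ltW | exact: polar_u_le].
  have -> : d j = 0 by have := d_ge0 j; lia.
  by rewrite !mul0r.
have : 0 <= (m - 2) * (- q u) by apply: mulr_ge0; lia.
nia.
Qed.

Lemma dot_polar_root_le : 2 <= m -> 3 * dot d (polar qc v) <= 2 * (m - 2).
Proof.
move=> m_ge2.
suff : 3 * dot d (polar qc v) <= (\sum_(j < n) polar qc v j) * (m - 2).
  by have := sum_polar_root_le2; nia.
rewrite mulr_sumr mulr_suml; apply: ler_sum => k _.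
have b_ge0 := polar_root_ge0 k.
have [dk_gt0|dk_le0] := ltrP 0 (d k); last first.
  have -> : d k = 0 by have := d_ge0 k; lia.
  by rewrite mul0r mulr0; apply: mulr_ge0; lia.
have := sum_descent_ge dk_gt0.
have : 0 <= polar qc v k * (polar qc v k - 1).
  have [b_gt0|b_le0] := ltrP 0 (polar qc v k); first by apply: mulr_ge0; lia.
  by have -> : polar qc v k = 0 by lia.
nia.
Qed.

Lemma no_descent : False.
Proof.
case: (boolP [exists j, 0 < d j]) => [/existsP [j dj_gt0] | /existsPn d_le0].
  have m_ge4 : 4 <= m.
    by have := sum_descent_ge dj_gt0; have := polar_root_ge0 j; lia.
  have m_ge2 : 2 <= m by lia.
  by have := dot_polar_root_ge m_ge2; have := dot_polar_root_le m_ge2; lia.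
move: qu_le0; rewrite (eq_unit_form _ (y := v)) ?unit_form_root // => i.
by have := d_le0 i; rewrite -leNgt; have := d_ge0 i; lia.
Qed.

End Descent.

Lemma unit_form_root_add_gt0 (d : 'I_n -> int) :
  (forall i, 0 <= d i) -> 0 < q (fun i => v i + d i).
Proof.
move=> d_ge0; have [N] : exists N : nat, \sum_(i < n) d i <= N%:Z.
  by exists (absz (\sum_(i < n) d i)); rewrite abszE ler_norm.
elim: N d d_ge0 => [|N IH] d d_ge0 sum_le; rewrite ltNge; apply/negP => qu_le0;
  apply: (no_descent d_ge0 qu_le0) => j dj_gt0.
  have sum_eq0 : \sum_(i < n) d i = 0.
    by apply/eqP; rewrite eq_le sum_le sumr_ge0.
  by have := psumr_eq0P (fun i _ => d_ge0 i) sum_eq0 (i := j) isT; lia.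
apply: polar_root_add_le => //; apply: IH; first exact: sub_ebasis_ge0.
rewrite sumrB sum_ebasis; change (\sum_(i < n) d i - 1 <= N%:Z); lia.
Qed.

Lemma unit_form_ge0 (x : 'I_n -> int) : (forall i, 0 <= x i) -> 0 <= q x.
Proof.
move=> x_ge0; rewrite leNgt; apply/negP => qx_lt0.
pose K := 1 + dot x (polar qc v).
have K_ge1 : 1 <= K.
  suff : 0 <= dot x (polar qc v) by rewrite /K; lia.
  apply: sumr_ge0 => j _.
  by apply: mulr_ge0; [exact: x_ge0 | exact: polar_root_ge0].
have Kx_ge0 i : 0 <= K * x i by apply: mulr_ge0; [lia | exact: x_ge0].
have := unit_form_root_add_gt0 Kx_ge0.
rewrite unit_formD unit_formZ unit_form_root dotZl.
have : dot x (polar qc v) = K - 1 by rewrite /K; ring.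
nia.
Qed.

End MaximalRoot.

Theorem theorem1p8 (n : nat) (qc : 'I_n -> 'I_n -> int) :
  slender qc ->
  (exists v : 'I_n -> int, maximal_root qc v /\ omnipresent v) ->
  weakly_nonneg qc.
Proof.
move=> q_slender [v [v_max v_omni]] x.
exact: unit_form_ge0 q_slender v_max v_omni x.
Qed.
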